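(* Every graph $G$ with $v(G) \geq 3$ vertices satisfies $\tau_4(G) \leq v(G) - 3$ in the $K_4$-bootstrap percolation process. In other words, for each $t \geq 1$, the graphs in the family $\mathcal H_t$ (for $r=4$, which have $t+3$ vertices and saturation time $t$) are vertex-minimal among graphs $G$ with $\tau_4(G) = t$.
   Context: $K_4$-bootstrap percolation: for a graph $G$ on vertex set $[n]$, set $G_0 := G$ and $G_{t+1} := G_t \cup \{e : \exists$ a copy $H$ of $K_4$ with $e \in H \subseteq G_t \cup \{e\}\}$; the saturation time is $\tau_4(G) := \min\{t \geq 0 : G_t = \bigcup_s G_s\}$. The family $\mathcal H_t$ (for $r=4$): start with a triangle (body) on $V_0$ and a fixed vertex $v_0 \in V_0$; $\mathcal H_1 = \{K_4 - e\}$, obtained by adding a vertex $v_1$ adjacent to $v_0$ and one other body vertex; for $t \geq 2$, $H_t \in \mathcal H_t$ is obtained from some $H_{t-1} \in \mathcal H_{t-1}$ (on $V_{t-1}$) by adding a new vertex $v_t$ with exactly $2$ neighbours in $V_{t-1}$, one of which is $v_{t-1}$ and the other of which is not a neighbour of $v_{t-1}$. *)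

From mathcomp Require Import all_boot.
Set Implicit Arguments. Unset Strict Implicit. Unset Printing Implicit Defensive.

Definition simple_graph (n : nat) (G : rel 'I_n) : Prop :=
  (forall x y, G x y = G y x) /\ (forall x, G x x = false).

Definition k4_step (n : nat) (G : rel 'I_n) : rel 'I_n :=
  fun x y =>
    G x y ||
    ((x != y) &&
     [exists a, [exists b,
        [&& a != x, a != y, b != x, b != y, a != b,
            G x a, G x b, G y a, G y b & G a b]]]).

Definition k4_process (n : nat) (G : rel 'I_n) (t : nat) : rel 'I_n :=
  iter t (@k4_step n) G.

Definition k4_closure (n : nat) (G : rel 'I_n) (x y : 'I_n) : Prop :=
  exists s, k4_process G s x y.

Definition k4_saturated_at (n : nat) (G : rel 'I_n) (t : nat) : Prop :=
  forall x y, k4_process G t x y <-> k4_closure G x y.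

From mathcomp Require Import all_boot.
From mathcomp Require Import zify.

Set Implicit Arguments.
Unset Strict Implicit.
Unset Printing Implicit Defensive.

(* Every edge xy that first appears in G_{t+1} lies next to a clique Q of
   G_{t+1} with at least t + 4 vertices, in the sense that each of x and y is
   in Q or adjacent to two vertices of Q. Indeed, if xy appears through the
   K_4 on {x, y, a, b}, one of the five other edges uv of that K_4 is itself
   new in G_t and comes with such a clique Q of G_t; the vertices of the K_4
   that are attached to Q become joined to all of Q one step later, and at
   least one of them lies outside Q (otherwise xy would already be present).
   So an edge new at time n - 2 would need a clique on n + 1 vertices. *)

Section K4Bootstrap.
Variable n : nat.
Implicit Types (H : rel 'I_n) (Q S K : {set 'I_n}).

Definition k4_witness H (x y a b : 'I_n) : bool :=
  [&& a != x, a != y, b != x, b != y, a != b,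
      H x a, H x b, H y a, H y b & H a b].

Lemma k4_witnessP H x y a b :
  reflect ([/\ a != x, a != y, b != x, b != y & a != b] /\
           [/\ H x a, H x b, H y a, H y b & H a b])
          (k4_witness H x y a b).
Proof.
apply: (iffP idP) => [/and5P[? ? ? ? /and5P[? ? ? ? /andP[? ?]]] //|].
by case=> -[? ? ? ? ?] [? ? ? ? ?]; do 2 (apply/and5P; split=> //); apply/andP.
Qed.

Lemma k4_step_witness H x y a b :
  x != y -> k4_witness H x y a b -> k4_step H x y.
Proof.
move=> xy wit; apply/orP; right; rewrite xy /=.
by apply/existsP; exists a; apply/existsP; exists b.
Qed.

Lemma k4_stepP H x y :
  k4_step H x y -> H x y \/ x != y /\ exists a b, k4_witness H x y a b.
Proof.
case/orP=> [|/andP[xy /existsP[a /existsP[b wit]]]]; first by left.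
by right; split=> //; exists a, b.
Qed.

Lemma k4_step_sub H x y : H x y -> k4_step H x y.
Proof. by rewrite /k4_step => ->. Qed.

Lemma k4_step_mono H H' :
  (forall x y, H x y -> H' x y) -> forall x y, k4_step H x y -> k4_step H' x y.
Proof.
move=> sub x y /k4_stepP[/sub/k4_step_sub //|[xy [a [b /k4_witnessP[dis e]]]]].
apply: (k4_step_witness (a := a) (b := b)) => //; apply/k4_witnessP.
by split=> //; case: e => *; split; apply: sub.
Qed.

Lemma k4_step_simple H : simple_graph H -> simple_graph (k4_step H).
Proof.
case=> symH irrH.
have step_sym x y : k4_step H x y -> k4_step H y x.
  case/k4_stepP=> [Hxy|[xy [a [b /k4_witnessP[[? ? ? ? ?] [? ? ? ? ?]]]]]].
    by apply: k4_step_sub; rewrite symH.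
  apply: (k4_step_witness (a := a) (b := b)); first by rewrite eq_sym.
  by apply/k4_witnessP.
split=> [x y|x]; first by apply/idP/idP; apply: step_sym.
by apply/negbTE/negP=> /k4_stepP[|[]]; rewrite ?irrH ?eqxx.
Qed.

Definition clique H Q := forall p q, p \in Q -> q \in Q -> p != q -> H p q.

Definition attached H Q (w : 'I_n) : bool :=
  (w \in Q) ||
  [exists p, exists q, [&& p \in Q, q \in Q, p != q, H w p & H w q]].

Lemma attachedI H Q w p q :
  p \in Q -> q \in Q -> p != q -> H w p -> H w q -> attached H Q w.
Proof.
move=> pQ qQ pq wp wq; apply/orP; right.
by apply/existsP; exists p; apply/existsP; exists q; rewrite pQ qQ pq wp wq.
Qed.

Lemma attached_adj H Q u v w :
  u \in Q -> v \in Q -> u != v -> (w != u -> H w u) -> (w != v -> H w v) ->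
  attached H Q w.
Proof.
move=> uQ vQ uv wu wv.
have [wQ|wQ] := boolP (w \in Q); first by rewrite /attached wQ.
by apply: (attachedI uQ vQ uv); [apply: wu | apply: wv];
  apply: contraNneq wQ => ->.
Qed.

Lemma attached_step H Q w q :
  simple_graph H -> clique H Q -> attached H Q w -> q \in Q -> w != q ->
  k4_step H w q.
Proof.
case=> symH irrH cQ.
case/orP=> [wQ qQ wq|/existsP[p1 /existsP[q1]]]; first exact/k4_step_sub/cQ.
case/and5P=> p1Q q1Q p1q1 wp1 wq1 qQ wq.
have p1w : p1 != w by apply: contraTneq wp1 => ->; rewrite irrH.
have q1w : q1 != w by apply: contraTneq wq1 => ->; rewrite irrH.
have [->|qp1] := eqVneq q p1; first exact: k4_step_sub.
have [->|qq1] := eqVneq q q1; first exact: k4_step_sub.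
apply: (k4_step_witness (a := p1) (b := q1)) => //; apply/k4_witnessP.
by split; split=> //; first [exact: cQ | rewrite eq_sym].
Qed.

Lemma clique_step_setU H Q S :
  simple_graph H -> clique H Q -> {in S, forall w, attached H Q w} ->
  clique (k4_step H) S -> clique (k4_step H) (Q :|: S).
Proof.
move=> sH cQ aS cS p q; rewrite !inE => /orP[pQ|pS] /orP[qQ|qS] pq.
- exact/k4_step_sub/cQ.
- have [symH' _] := k4_step_simple sH.
  by rewrite symH'; apply: (attached_step sH cQ); rewrite ?aS // eq_sym.
- exact: (attached_step sH cQ) (aS _ pS) qQ pq.
- exact: cS.
Qed.

Lemma witness_step_clique H x y a b :
  simple_graph H -> x != y -> k4_witness H x y a b ->
  clique (k4_step H) [set x; y; a; b].
Proof.
move=> sH xy wit; have [symH' _] := k4_step_simple sH.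
have xy' := k4_step_witness xy wit.
case/k4_witnessP: wit => _ [/k4_step_sub ? /k4_step_sub ? /k4_step_sub ?
  /k4_step_sub ? /k4_step_sub ?].
move=> p q; rewrite !inE.
by move=> /orP[/orP[/orP[]|]|] /eqP-> /orP[/orP[/orP[]|]|] /eqP->;
  rewrite ?eqxx //= => _; rewrite symH'.
Qed.

Lemma card_witness H x y a b :
  x != y -> k4_witness H x y a b -> #|[set x; y; a; b]| = 4.
Proof.
move=> xy /k4_witnessP[[ax ay bx by_ ab] _].
have -> : [set x; y; a; b] = x |: (y |: (a |: [set b])).
  by apply/setP=> z; rewrite !inE !orbA.
rewrite !cardsU1 cards1 !inE.
by rewrite (negbTE xy) ![x == _]eq_sym ![y == _]eq_sym (negbTE ax) (negbTE ay)
  (negbTE bx) (negbTE by_) (negbTE ab).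
Qed.

Lemma witness_new_edge H x y a b :
  k4_witness (k4_step H) x y a b -> ~~ k4_witness H x y a b ->
  exists u v, [/\ u \in [set x; y; a; b], v \in [set x; y; a; b],
                  k4_step H u v & ~~ H u v].
Proof.
case/k4_witnessP=> dis [xa xb ya yb ab] /k4_witnessP not_wit.
have [xa0|] := boolP (H x a); last by exists x, a; rewrite !inE !eqxx ?orbT.
have [xb0|] := boolP (H x b); last by exists x, b; rewrite !inE !eqxx ?orbT.
have [ya0|] := boolP (H y a); last by exists y, a; rewrite !inE !eqxx ?orbT.
have [yb0|] := boolP (H y b); last by exists y, b; rewrite !inE !eqxx ?orbT.
have [ab0|] := boolP (H a b); last by exists a, b; rewrite !inE !eqxx ?orbT.
by case: not_wit.
Qed.

Lemma witness_adj H x y a b z w :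
  simple_graph H -> k4_witness H x y a b -> z \in [set a; b] ->
  w \in [set x; y; a; b] -> w != z -> H z w.
Proof.
case=> symH _ /k4_witnessP[_ [xa xb ya yb ab]].
rewrite !inE => /orP[]/eqP-> /orP[/orP[/orP[]|]|]/eqP-> ne;
  first [done | by rewrite symH | by rewrite eqxx in ne].
Qed.

Lemma witness_escape H Q x y a b u v :
  simple_graph H -> clique H Q -> x != y -> k4_witness H x y a b ->
  ~~ H x y -> u \in [set x; y; a; b] -> v \in [set x; y; a; b] -> u != v ->
  attached H Q u -> attached H Q v ->
  exists2 w, w \in [set x; y; a; b] & attached H Q w && (w \notin Q).
Proof.
move=> sH cQ xy wit nxy uK vK uv au av.
have [uQ|nuQ] := boolP (u \in Q); last by exists u; rewrite ?au.
have [vQ|nvQ] := boolP (v \in Q); last by exists v; rewrite ?av.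
have att_ab z : z \in [set a; b] -> attached H Q z.
  by move=> zab; apply: (attached_adj uQ vQ uv); rewrite eq_sym;
    apply: (witness_adj sH wit zab).
have [aQ|naQ] := boolP (a \in Q); last first.
  by exists a; rewrite ?att_ab ?inE ?eqxx ?orbT.
have [bQ|nbQ] := boolP (b \in Q); last first.
  by exists b; rewrite ?att_ab ?inE ?eqxx ?orbT.
case/k4_witnessP: wit => -[_ _ _ _ ab] [xa xb ya yb _].
have [xQ|nxQ] := boolP (x \in Q); last first.
  by exists x; rewrite ?(attachedI aQ bQ) ?inE ?eqxx.
have [yQ|nyQ] := boolP (y \in Q); last first.
  by exists y; rewrite ?(attachedI aQ bQ) ?inE ?eqxx ?orbT.
by case/negP: nxy; apply: cQ.
Qed.

Lemma clique_grow H Q x y a b u v :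
  simple_graph H -> clique H Q -> x != y -> k4_witness H x y a b ->
  ~~ H x y -> u \in [set x; y; a; b] -> v \in [set x; y; a; b] -> u != v ->
  attached H Q u -> attached H Q v ->
  exists Q', [/\ clique (k4_step H) Q', #|Q| < #|Q'|,
                 attached (k4_step H) Q' x & attached (k4_step H) Q' y].
Proof.
move=> sH cQ xy wit nxy uK vK uv au av.
set K := [set x; y; a; b].
have cK := witness_step_clique sH xy wit.
set S := [set w in K | attached H Q w].
have SK w : w \in S -> w \in K by rewrite inE => /andP[].
have [w wK /andP[aw wQ]] := witness_escape sH cQ xy wit nxy uK vK uv au av.
have uQS : u \in Q :|: S by rewrite in_setU in_set uK au orbT.
have vQS : v \in Q :|: S by rewrite in_setU in_set vK av orbT.
have att_K z : z \in K -> attached (k4_step H) (Q :|: S) z.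
  by move=> zK; apply: (attached_adj uQS vQS uv); apply: cK.
exists (Q :|: S); split; rewrite ?att_K ?inE ?eqxx ?orbT //.
- apply: clique_step_setU => // [z|p q pS qS]; first by rewrite inE => /andP[].
  by apply: cK; apply: SK.
- apply/proper_card/properUl; apply: contraNN wQ => /subsetP; apply.
  by rewrite inE wK aw.
Qed.

End K4Bootstrap.

Section K4Process.
Variables (n : nat) (G : rel 'I_n).
Notation P t := (k4_process G t).

Lemma k4_process_simple t : simple_graph G -> simple_graph (P t).
Proof. by move=> sG; elim: t => // t; apply: k4_step_simple. Qed.

Lemma new_edge_clique t x y : simple_graph G -> P t.+1 x y -> ~~ P t x y ->
  exists Q, [/\ clique (P t.+1) Q, t + 4 <= #|Q|,
                attached (P t.+1) Q x & attached (P t.+1) Q y].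
Proof.
move=> sG; elim: t x y => [|t IH] x y Pxy nPxy.
  case/k4_stepP: Pxy => [/(negP nPxy)//|[xy [a [b wit]]]].
  exists [set x; y; a; b].
  rewrite (card_witness xy wit) /attached !inE !eqxx ?orbT.
  by split=> //; apply: witness_step_clique.
have sP : simple_graph (P t.+1) := k4_process_simple t.+1 sG.
case/k4_stepP: Pxy => [/(negP nPxy)//|[xy [a [b wit]]]].
have nwit : ~~ k4_witness (P t) x y a b.
  by apply: contra nPxy; apply: k4_step_witness.
have [u [v [uK vK Puv nPuv]]] := witness_new_edge wit nwit.
have uv : u != v.
  by have [_ irrP] := sP; apply: contraTneq Puv => ->; apply/negbT/irrP.
have [Q [cQ sizeQ au av]] := IH u v Puv nPuv.
have [Q' [cQ' sizeQ' ax ay]] := clique_grow sP cQ xy wit nPxy uK vK uv au av.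
exists Q'; split; [exact: cQ' | exact: leq_ltn_trans sizeQ sizeQ' |
  exact: ax | exact: ay].
Qed.

Lemma k4_saturated_at_fixpoint t :
  (forall x y, P t.+1 x y -> P t x y) -> k4_saturated_at G t.
Proof.
move=> stop; have sub s x y : P s x y -> P t x y.
  elim: s x y => [|s IH] x y; last by move/(k4_step_mono IH); apply: stop.
  by elim: t {stop} => // t IHt /IHt /k4_step_sub.
by move=> x y; split=> [|[s /sub //]]; exists t.
Qed.

End K4Process.

Theorem theorem2 (n : nat) (G : rel 'I_n) :
  3 <= n -> simple_graph G ->
  exists t, t <= n - 3 /\ k4_saturated_at G t.
Proof.
move=> n3 sG; exists (n - 3); split=> //.
apply: k4_saturated_at_fixpoint => x y Pxy; apply/negPn/negP => nPxy.
have [Q [_ sizeQ _ _]] := new_edge_clique sG Pxy nPxy.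
by have := max_card Q; rewrite card_ord; lia.
Qed.
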